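(* Let $\alpha,\beta$ be positive integers and let $h$ be a real-valued function differentiable on an open neighbourhood of $\mathcal{U}_2$ in $\mathbb{C}^{2\times2}$, with $h(\Psi D)=h(\Psi)$ for all $\Psi\in\mathcal{U}_2$ and diagonal unitary $D$, such that $h(\Psi(\theta,\phi))=z_{\alpha,\beta}(\theta,\phi)^TMz_{\alpha,\beta}(\theta,\phi)+C$ for all $\theta,\phi\in\mathbb{R}$, for some real symmetric $M\in\mathbb{R}^{3\times3}$ and $C\in\mathbb{R}$. Let $\lambda_1\ge\lambda_2\ge\lambda_3$ be the eigenvalues of $M$, and assume $\frac{\lambda_2-\lambda_3}{\lambda_1-\lambda_3}\le1-\varepsilon$ for some $\varepsilon>0$. Let $w$ be a unit eigenvector of $M$ for $\lambda_1$ with $w_1\ge0$, let $\theta_*\in[0,\pi/(2\alpha)]$, $\phi_*\in\mathbb{R}$ satisfy $z_{\alpha,\beta}(\theta_*,\phi_* )=w$, and $\Psi_*=\Psi(\theta_*,\phi_* )$. Then $$h(\Psi_* )-h(I_2)\ge\frac{\varepsilon}{4\alpha}\,\|\operatorname{grad}h(I_2)\|\,\|\Psi_*-I_2\|.$$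
   Context: $\mathcal{U}_2$ is the group of $2\times2$ unitary matrices; $\|\cdot\|$ the Frobenius norm; $\mathbb{C}^{2\times2}$ carries the real inner product $\mathrm{Re}\,\mathrm{tr}(X^HY)$; $\nabla h=\partial h/\partial X^{\Re}+\mathrm{i}\,\partial h/\partial X^{\Im}$ and $\operatorname{grad}h(U)=U\,\mathrm{skew}(U^H\nabla h(U))$ with $\mathrm{skew}(P)=\frac12(P-P^H)$. $\Psi(\theta,\phi)=\begin{bmatrix}\cos\theta&-\sin\theta e^{\mathrm{i}\phi}\\ \sin\theta e^{-\mathrm{i}\phi}&\cos\theta\end{bmatrix}$ and $z_{\alpha,\beta}(\theta,\phi)=(\cos\alpha\theta,-\sin\alpha\theta\cos\beta\phi,-\sin\alpha\theta\sin\beta\phi)^T$. *)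

(* A complex 2x2 matrix X is represented by the pair
   (Re X, Im X) of real 2x2 matrices, i.e. C^{2x2} is identified with
   'M[R]_2 * 'M[R]_2 (a real normed space). *)
From HB Require Import structures.
From mathcomp Require Import all_boot all_order all_algebra.
From mathcomp Require Import all_classical all_reals all_analysis.
Set Implicit Arguments. Unset Strict Implicit. Unset Printing Implicit Defensive.
Import Order.TTheory GRing.Theory Num.Theory.
Import numFieldNormedType.Exports.
Local Open Scope ring_scope.

Section Defs.
Variable R : realType.

Definition cmx := ('M[R]_2 * 'M[R]_2)%type.

Definition cmul (X Y : cmx) : cmx :=
  (X.1 *m Y.1 - X.2 *m Y.2, X.1 *m Y.2 + X.2 *m Y.1).
Definition cadj (X : cmx) : cmx := (X.1^T, - X.2^T).
Definition cI2 : cmx := (1%:M, 0).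
Definition csub (X Y : cmx) : cmx := (X.1 - Y.1, X.2 - Y.2).

Definition unitary (U : cmx) : Prop := cmul (cadj U) U = cI2.
Definition is_diag2 (D : cmx) : Prop :=
  forall i j : 'I_2, i != j -> D.1 i j = 0 /\ D.2 i j = 0.
Definition diag_unitary (D : cmx) : Prop := unitary D /\ is_diag2 D.

Definition frob (X : cmx) : R :=
  Num.sqrt (\sum_(i < 2) \sum_(j < 2) (X.1 i j ^+ 2 + X.2 i j ^+ 2)).

Definition egrad (h : cmx -> R) (X : cmx) : cmx :=
  (\matrix_(i, j) ('D_((delta_mx i j : 'M[R]_2), (0 : 'M[R]_2)) h X),
   \matrix_(i, j) ('D_((0 : 'M[R]_2), (delta_mx i j : 'M[R]_2)) h X)).

Definition skew (P : cmx) : cmx :=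
  ((2%:R)^-1 *: (csub P (cadj P)).1, (2%:R)^-1 *: (csub P (cadj P)).2).

Definition rgrad (h : cmx -> R) (U : cmx) : cmx :=
  cmul U (skew (cmul (cadj U) (egrad h U))).

Definition Psi (t p : R) : cmx :=
  (\matrix_(i < 2, j < 2)
     (if i == j then cos t
      else if (i == 0) then - (sin t * cos p) else sin t * cos p),
   \matrix_(i < 2, j < 2)
     (if i == j then 0 else - (sin t * sin p))).

Definition zab (a b : nat) (t p : R) : 'cV[R]_3 :=
  \col_(k < 3)
    (if k == 0 then cos (a%:R * t)
     else if k == 1 then - (sin (a%:R * t) * cos (b%:R * p))
     else - (sin (a%:R * t) * sin (b%:R * p))).

End Defs.

From Pilot Require Import Defs.
From HB Require Import structures.
From mathcomp Require Import all_boot all_order all_algebra.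
From mathcomp Require Import all_classical all_reals all_analysis.
From mathcomp Require Import ring lra.
Set Implicit Arguments. Unset Strict Implicit. Unset Printing Implicit Defensive.
Import Order.TTheory GRing.Theory Num.Theory.
Import numFieldNormedType.Exports.
Local Open Scope ring_scope.

(* Along t |-> Psi(t, phi), h is the quadratic form z^T M z in
   z = (cos at, -sin at cos b phi, -sin at sin b phi), whose slope at t = 0 is
   -2a (M10 cos b phi + M20 sin b phi).  Invariance under diagonal unitaries kills
   the diagonal of Im grad h(I), and the slopes for all phi then bound the rest:
   |grad h(I)|^2 <= 2 a^2 s with s = M10^2 + M20^2.  At the target point
   (t0, phi0) we have |Psi - I|^2 = 4 (1 - cos t0) <= 8 sin^2 (a t0) = 8 (1 - w0^2)
   and h(Psi) - h(I) = l1 - M00.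
   For the spectral side, Cayley-Hamilton shows that the product T of any two
   factors M - l of the characteristic polynomial is symmetric with T^2 = k T,
   so (M - l1)(M - l2) >= 0, (M - l1)(M - l3) <= 0 and
   (M - l2)(M - l3) = (l1 - l2)(l1 - l3) w w^T.  Their (0,0) entries give
   s <= (l1 - l3)(l1 - M00) and (l1 - l2)(1 - w0^2) <= l1 - M00, hence with the
   gap eps (l1 - l3) <= l1 - l2 we get eps^2 s (1 - w0^2) <= (l1 - M00)^2, which
   is the square of the claim. *)

Lemma sum_ord2 (V : nmodType) (F : 'I_2 -> V) : \sum_i F i = F 0 + F 1.
Proof. by rewrite !big_ord_recl big_ord0 addr0; congr (F _ + F _); exact: val_inj. Qed.

Lemma sum_ord3 (V : nmodType) (F : 'I_3 -> V) : \sum_i F i = F 0 + F 1 + F 2.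
Proof.
by rewrite !big_ord_recl big_ord0 addr0 addrA; congr (F _ + F _ + F _); exact: val_inj.
Qed.

Lemma det_mx33 (R : comNzRingType) (A : 'M[R]_3) : \det A =
  A 0 0 * (A 1 1 * A 2 2 - A 1 2 * A 2 1)
  - A 0 1 * (A 1 0 * A 2 2 - A 1 2 * A 2 0)
  + A 0 2 * (A 1 0 * A 2 1 - A 1 1 * A 2 0).
Proof.
rewrite (expand_det_row _ 0) !big_ord_recl big_ord0 /cofactor.
rewrite !(expand_det_row _ 0) !big_ord_recl !big_ord0 /cofactor !det_mx11 !mxE /=.
pose g (i j : nat) := A (inord i) (inord j).
have Ag (i j : 'I_3) : A i j = g i j by rewrite /g !inord_val.
by rewrite !Ag /= !expr0 !expr1 !expr2 /g; ring.
Qed.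

Lemma horner_char_poly (R : comNzRingType) n (A : 'M[R]_n) t :
  (char_poly A).[t] = \det (t%:M - A).
Proof.
rewrite /char_poly -[_.[t]]/(horner_eval t _) -det_map_mx; congr (\det _).
apply/matrixP => i j; rewrite !mxE /= rmorphB rmorphMn /=.
by rewrite !horner_evalE hornerX hornerC.
Qed.

Lemma mulmx_subr_scalar (R : comNzRingType) n (A : 'M[R]_n) a b :
  (A - a%:M) *m (A - b%:M) = A *m A - (a + b) *: A + (a * b)%:M.
Proof.
rewrite mulmxBl !mulmxBr mul_mx_scalar !mul_scalar_mx scale_scalar_mx.
by apply/matrixP => i j; rewrite !mxE; ring.
Qed.

Lemma mulmx_subr_scalar_eigen (R : comNzRingType) n (A : 'M[R]_n) (v : 'cV[R]_n) l a :
  A *m v = l *: v -> (A - a%:M) *m v = (l - a) *: v.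
Proof. by move=> Av; rewrite mulmxBl Av mul_scalar_mx scalerBl. Qed.

Section SymmetricMatrices.
Variables (R : realFieldType) (n : nat).
Implicit Types Z : 'M[R]_n.

Lemma mulmx_sym_diag Z i : Z^T = Z -> (Z *m Z) i i = \sum_j Z j i ^+ 2.
Proof. by move=> ZT; rewrite mxE; apply: eq_bigr => j _; rewrite expr2 -{1}ZT mxE. Qed.

Lemma sym_mulmx_scale_diag_ge0 Z k i :
  Z^T = Z -> 0 <= k -> Z *m Z = k *: Z -> 0 <= Z i i.
Proof.
move=> ZT k_ge0 ZZ; have := mulmx_sym_diag i ZT; rewrite ZZ mxE.
have sq_ge0 : 0 <= \sum_j Z j i ^+ 2 by apply: sumr_ge0 => j _; exact: sqr_ge0.
case: ltrgt0P k_ge0 => // [k_gt0 | ->] _.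
  by move=> ZZi; rewrite -(pmulr_rge0 _ k_gt0) ZZi.
rewrite mul0r => /esym/eqP; rewrite psumr_eq0 => [|j _]; last exact: sqr_ge0.
by move=> /allP/(_ i (mem_index_enum _)); rewrite /= sqrf_eq0 => /eqP ->.
Qed.

Lemma sym_mxtrace_sqr_eq0 Z : Z^T = Z -> \tr (Z *m Z) = 0 -> Z = 0.
Proof.
move=> ZT; rewrite /mxtrace; under eq_bigr do rewrite mulmx_sym_diag //.
move=> /eqP; rewrite psumr_eq0 => [/allP Z0|i _]; last first.
  by apply: sumr_ge0 => j _; exact: sqr_ge0.
apply/matrixP => i j; rewrite mxE.
move: (Z0 j (mem_index_enum _)); rewrite /= psumr_eq0 => [|k _]; last exact: sqr_ge0.
by move=> /allP/(_ i (mem_index_enum _)); rewrite /= sqrf_eq0 => /eqP.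
Qed.

End SymmetricMatrices.

Lemma mxtrace_char_poly3 (R : realFieldType) (M : 'M[R]_3) l1 l2 l3 :
  char_poly M = ('X - l1%:P) * ('X - l2%:P) * ('X - l3%:P) ->
  \tr ((M - l2%:M) *m (M - l3%:M)) = (l1 - l2) * (l1 - l3).
Proof.
move=> charM.
have det_char t : \det (t%:M - M) = (t - l1) * (t - l2) * (t - l3).
  by rewrite -horner_char_poly charM !hornerE.
have := det_char 0; have := det_char 1; have := det_char (-1).
rewrite mulmx_subr_scalar /mxtrace sum_ord3 !det_mx33 !mxE !sum_ord3 /=.
rewrite !mulr1n !mulr0n => detN1 det1 det0.
set e1 := M 0 0 + M 1 1 + M 2 2.
set e2 := M 0 0 * M 1 1 + M 0 0 * M 2 2 + M 1 1 * M 2 2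
  - M 0 1 * M 1 0 - M 0 2 * M 2 0 - M 1 2 * M 2 1.
transitivity (e1 ^+ 2 - 2 * e2 - (l2 + l3) * e1 + 3 * l2 * l3).
  by rewrite /e1 /e2; ring.
have -> : e1 = l1 + l2 + l3 by rewrite /e1; lra.
have -> : e2 = l1 * l2 + l1 * l3 + l2 * l3 by rewrite /e2; lra.
ring.
Qed.

Lemma char_poly3_factor_sqr (R : comNzRingType) (M : 'M[R]_3) a b c :
  char_poly M = ('X - a%:P) * ('X - b%:P) * ('X - c%:P) ->
  (M - a%:M) *m (M - b%:M) *m ((M - a%:M) *m (M - b%:M))
    = ((c - a) * (c - b)) *: ((M - a%:M) *m (M - b%:M)).
Proof.
move=> charM; set T := (M - a%:M) *m (M - b%:M).
have hornerT : horner_mx M ('X - a%:P) * horner_mx M ('X - b%:P) = T.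
  by rewrite /T !rmorphB /= horner_mx_X !horner_mx_C mulmxE.
have key : ('X - a%:P) * ('X - b%:P) * (('X - a%:P) * ('X - b%:P))
    = ((c - a) * (c - b))%:P * (('X - a%:P) * ('X - b%:P))
      + char_poly M * ('X + (c - a - b)%:P).
  by rewrite charM !(polyCM, polyCB, polyCD); ring.
have := congr1 (horner_mx M) key.
rewrite rmorphD !rmorphM /= Cayley_Hamilton mul0r addr0 !horner_mx_C hornerT.
by rewrite -!mulmxE => ->; rewrite -scalar_mxM mul_scalar_mx.
Qed.

(* For l1 = l3 the ratio is (l2 - l3) / 0 = 0 and the conclusion is trivial. *)
Lemma gap_of_ratio (R : realFieldType) (l1 l2 l3 eps : R) :
  l3 <= l2 -> l2 <= l1 -> (l2 - l3) / (l1 - l3) <= 1 - eps ->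
  eps * (l1 - l3) <= l1 - l2.
Proof.
move=> l32 l21; have [<-|l13] := eqVneq l1 l3; first by rewrite subrr mulr0 subr_ge0.
have l13_gt0 : 0 < l1 - l3 by rewrite subr_gt0 lt_def l13 (le_trans l32 l21).
by rewrite ler_pdivrMr //; lra.
Qed.

Lemma spectral_gap_ineq (R : realFieldType) (m s x l1 l2 l3 eps : R) :
  0 < eps -> eps * (l1 - l3) <= l1 - l2 -> l3 <= l2 -> l2 <= l1 -> 0 <= s ->
  0 <= m ^+ 2 + s - (l1 + l2) * m + l1 * l2 ->
  m ^+ 2 + s - (l1 + l3) * m + l1 * l3 <= 0 ->
  m ^+ 2 + s - (l2 + l3) * m + l2 * l3 = (l1 - l2) * (l1 - l3) * x ^+ 2 ->
  0 <= l1 - m /\ eps ^+ 2 * s * (1 - x ^+ 2) <= (l1 - m) ^+ 2.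
Proof.
move=> eps_gt0 gap l32 l21 s_ge0 T12 T13 T23.
have s_le : s <= (l1 - m) * (m - l3) by nra.
have D_ge0 : 0 <= l1 - m by nra.
split=> //.
have [l13 | l13] := eqVneq l1 l3.
  have s0 : s = 0 by rewrite l13 in s_le; nra.
  by rewrite s0 mulr0 mul0r sqr_ge0.
have l13_gt0 : 0 < l1 - l3 by rewrite subr_gt0 lt_def l13 (le_trans l32 l21).
have q_le : (l1 - l2) * (1 - x ^+ 2) <= l1 - m by rewrite -(ler_pM2l l13_gt0); nra.
have [q_lt0 | q_ge0] := ltP (1 - x ^+ 2) 0.
  by have := mulr_ge0 (sqr_ge0 eps) s_ge0; nra.
have eps_le1 : eps <= 1 by nra.
have eps_q_le : eps * (l1 - l3) * (1 - x ^+ 2) <= l1 - m by nra.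
have s_le' : s <= (l1 - l3) * (l1 - m) by nra.
apply: (@le_trans _ _ (eps * (l1 - m) * (eps * (l1 - l3) * (1 - x ^+ 2)))).
  rewrite (_ : _ * (_ * _) = eps ^+ 2 * ((l1 - l3) * (l1 - m)) * (1 - x ^+ 2)); last by ring.
  by rewrite ler_wpM2r // ler_wpM2l // sqr_ge0.
apply: (@le_trans _ _ (eps * (l1 - m) * (l1 - m))).
  by rewrite ler_wpM2l // mulr_ge0 // ltW.
by rewrite expr2 ler_wpM2r // ler_piMl.
Qed.

Section SymmetricCubic.
Variables (R : realFieldType) (M : 'M[R]_3) (l1 l2 l3 : R) (w : 'cV[R]_3).
Hypotheses (MT : M^T = M)
  (charM : char_poly M = ('X - l1%:P) * ('X - l2%:P) * ('X - l3%:P))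
  (l21 : l2 <= l1) (l32 : l3 <= l2)
  (Mw : M *m w = l1 *: w) (w_unit : (w^T *m w) 0 0 = 1).

Local Notation T a b := ((M - a%:M) *m (M - b%:M)).

Let T_sym a b : (T a b)^T = T a b.
Proof.
by rewrite mulmx_subr_scalar !raddfD raddfN /= linearZ /= trmx_mul MT tr_scalar_mx.
Qed.

Lemma mulmx_sub12_diag_ge0 i : 0 <= T l1 l2 i i.
Proof.
apply: (sym_mulmx_scale_diag_ge0 _ (T_sym _ _) _ (char_poly3_factor_sqr charM)).
by apply: mulr_le0; rewrite subr_le0 // (le_trans l32 l21).
Qed.

Lemma mulmx_sub13_diag_le0 i : T l1 l3 i i <= 0.
Proof.
have charM' : char_poly M = ('X - l1%:P) * ('X - l3%:P) * ('X - l2%:P).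
  by rewrite charM -!mulrA [_ * ('X - l3%:P)]mulrC.
have TT : (- T l1 l3) *m (- T l1 l3) = - ((l2 - l1) * (l2 - l3)) *: (- T l1 l3).
  by rewrite mulNmx mulmxN opprK scaleNr scalerN opprK (char_poly3_factor_sqr charM').
have T_sym' : (- T l1 l3)^T = - T l1 l3 by rewrite raddfN /= T_sym.
have k_ge0 : 0 <= - ((l2 - l1) * (l2 - l3)) by rewrite oppr_ge0 mulr_le0_ge0 // subr_cp0.
by have := sym_mulmx_scale_diag_ge0 i T_sym' k_ge0 TT; rewrite mxE oppr_ge0.
Qed.

(* Q := T - k w w^T is symmetric with Q^2 = k Q and tr Q = 0, so tr (Q^2) = 0. *)
Lemma mulmx_sub23_rank1 : T l2 l3 = ((l1 - l2) * (l1 - l3)) *: (w *m w^T).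
Proof.
set k := (l1 - l2) * (l1 - l3); set P := w *m w^T.
have charM' : char_poly M = ('X - l2%:P) * ('X - l3%:P) * ('X - l1%:P).
  by rewrite charM -mulrA mulrC.
have TT := char_poly3_factor_sqr charM'.
have Tw : T l2 l3 *m w = k *: w.
  rewrite -mulmxA (mulmx_subr_scalar_eigen _ Mw) -scalemxAr.
  by rewrite (mulmx_subr_scalar_eigen _ Mw) scalerA mulrC.
have wT : w^T *m T l2 l3 = k *: w^T by rewrite -T_sym -trmx_mul Tw linearZ.
have ww : w^T *m w = 1%:M by apply/matrixP => i j; rewrite !ord1 w_unit mxE.
have TP : T l2 l3 *m P = k *: P by rewrite /P mulmxA Tw scalemxAl.
have PT : P *m T l2 l3 = k *: P by rewrite /P -mulmxA wT scalemxAr.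
have PP : P *m P = P by rewrite /P mulmxA -(mulmxA w) ww mulmx1.
move: TT TP PT; set T23 := T l2 l3 => TT TP PT.
set Q := T23 - k *: P.
have QT : Q^T = Q by rewrite /Q linearB /= linearZ /= T_sym trmx_mul trmxK.
have QQ : Q *m Q = k *: Q.
  rewrite /Q mulmxBl !mulmxBr TT -!scalemxAl -!scalemxAr TP PT PP.
  by rewrite subrr subr0 scalerBr.
have trQ : \tr Q = 0.
  rewrite /Q linearB /= linearZ /= /P (mxtrace_mulC w) ww mxtrace_scalar.
  by rewrite /T23 (mxtrace_char_poly3 charM) mulr1n mulr1 subrr.
apply/eqP; rewrite -subr_eq0 -/Q; apply/eqP/sym_mxtrace_sqr_eq0 => //.
by rewrite QQ mxtraceZ trQ mulr0.
Qed.

Lemma top_eigen_gap_bound eps : 0 < eps -> eps * (l1 - l3) <= l1 - l2 ->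
  0 <= l1 - M 0 0 /\
  eps ^+ 2 * (M 1 0 ^+ 2 + M 2 0 ^+ 2) * (1 - w 0 0 ^+ 2) <= (l1 - M 0 0) ^+ 2.
Proof.
move=> eps_gt0 gap; set s := M 1 0 ^+ 2 + M 2 0 ^+ 2.
have T00 c1 c2 : T c1 c2 0 0 = M 0 0 ^+ 2 + s - (c1 + c2) * M 0 0 + c1 * c2.
  have MM : (M *m M) 0 0 = M 0 0 ^+ 2 + s by rewrite mulmx_sym_diag // sum_ord3 -addrA.
  by move: MM; rewrite mulmx_subr_scalar !mxE eqxx mulr1n => ->.
apply: (spectral_gap_ineq eps_gt0 gap l32 l21); rewrite -?T00.
- by rewrite addr_ge0 // sqr_ge0.
- exact: mulmx_sub12_diag_ge0.
- exact: mulmx_sub13_diag_le0.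
- by rewrite mulmx_sub23_rank1 !mxE big_ord1 mxE expr2 mulrA.
Qed.

End SymmetricCubic.

Section Trigonometry.
Variable R : realType.

Lemma exists_cos_sin (x y : R) :
  x ^+ 2 + y ^+ 2 = 1 -> exists p, cos p = x /\ sin p = y.
Proof.
move=> xy1; have x_itv : -1 <= x <= 1 by apply/andP; split; nra.
have sin_acos_x : sin (acos x) = `|y|.
  by rewrite sin_acos // -xy1 addrAC subrr add0r sqrtr_sqr.
have [y_ge0 | y_lt0] := leP 0 y.
  by exists (acos x); rewrite acosK ?in_itv // sin_acos_x ger0_norm.
exists (- acos x); rewrite cosN sinN acosK ?in_itv // sin_acos_x ltr0_norm //.
by rewrite opprK.
Qed.

Lemma cos_sin_comb_sqr_le (x y p : R) :
  (x * cos p + y * sin p) ^+ 2 <= x ^+ 2 + y ^+ 2.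
Proof.
rewrite -[_ + _ in leRHS]mulr1 -(cos2Dsin2 p).
by have := sqr_ge0 (x * sin p - y * cos p); nra.
Qed.

Lemma sqr_le_of_cos_sin_comb (x y K : R) :
  (forall p, (cos p * x + sin p * y) ^+ 2 <= K) -> x ^+ 2 + y ^+ 2 <= K.
Proof.
move=> hK; have [xy0 | xy0] := eqVneq (x ^+ 2 + y ^+ 2) 0.
  by rewrite xy0; apply: le_trans (hK 0); exact: sqr_ge0.
have xy_gt0 : 0 < x ^+ 2 + y ^+ 2 by rewrite lt_def xy0 addr_ge0 ?sqr_ge0.
set r := Num.sqrt (x ^+ 2 + y ^+ 2).
have r_gt0 : 0 < r by rewrite sqrtr_gt0.
have r2 : r ^+ 2 = x ^+ 2 + y ^+ 2 by rewrite sqr_sqrtr // ltW.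
have [p [cp sp]] : exists p, cos p = x / r /\ sin p = y / r.
  by apply: exists_cos_sin; rewrite !expr_div_n -mulrDl r2 divff.
have := hK p; rewrite cp sp -r2.
have -> : x / r * x + y / r * y = r ^+ 2 / r.
  by rewrite r2 mulrDl !expr2 (mulrAC x) (mulrAC y).
by rewrite expr2 mulfK // gt_eqF.
Qed.

Lemma one_sub_cos_le (a : nat) (t : R) : (0 < a)%N -> 0 <= t <= pi / (2 * a%:R) ->
  (1 - cos t) / 2 <= 1 - cos (a%:R * t) ^+ 2.
Proof.
move=> a_gt0 /andP[t_ge0 t_le]; have a_ge1 : (1 : R) <= a%:R by rewrite ler1n.
have -> : 1 - cos (a%:R * t) ^+ 2 = (1 - cos (a%:R * t *+ 2)) / 2.
  by rewrite cos_mulr2n; field.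
rewrite ler_pM2r ?invr_gt0 // lerD2l lerN2.
have at_le : a%:R * t *+ 2 <= pi.
  by rewrite ler_pdivlMr ?mulr_gt0 ?ltr0n // in t_le; rewrite -mulr_natr; nra.
have t_le_at : t <= a%:R * t *+ 2 by rewrite -mulr_natr; nra.
have pi_ge0 := pi_ge0 R.
rewrite leNgt ltr_cos ?in_itv /= ?t_ge0 ?(le_trans t_ge0 t_le_at) ?(le_trans t_le_at at_le) //.
by rewrite -leNgt.
Qed.

End Trigonometry.

Lemma scaled_product_le (R : realFieldType) (eps A F1 F2 s q D : R) :
  0 < eps -> 0 < A -> 0 <= F1 -> 0 <= F2 -> 0 <= D ->
  F1 ^+ 2 <= 2 * A ^+ 2 * s -> F2 ^+ 2 <= 8 * q -> eps ^+ 2 * s * q <= D ^+ 2 ->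
  eps / (4 * A) * F1 * F2 <= D.
Proof.
move=> eps_gt0 A_gt0 F1_ge0 F2_ge0 D_ge0 F1_le F2_le sq_le.
set k := eps / (4 * A); have k_ge0 : 0 <= k by rewrite divr_ge0 ?mulr_ge0 // ltW.
have kFF_ge0 : 0 <= k * F1 * F2 by apply: mulr_ge0 => //; apply: mulr_ge0.
rewrite -ler_sqr ?nnegrE //; apply: le_trans sq_le.
apply: (@le_trans _ _ (k ^+ 2 * ((2 * A ^+ 2 * s) * (8 * q)))).
  rewrite exprMn [(k * F1) ^+ 2]exprMn -[_ * F2 ^+ 2]mulrA.
  by apply: ler_wpM2l; [exact: sqr_ge0 | apply: ler_pM; rewrite ?sqr_ge0].
by rewrite le_eqVlt; apply/orP; left; apply/eqP; rewrite /k; field; rewrite gt_eqF.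
Qed.

Lemma derive_trig_curve (R : realType) (V : normedModType R) (h : V -> R) (A B : V) :
  differentiable h A -> 'D_1 (fun t => h (cos t *: A + sin t *: B)) 0 = 'D_B h A.
Proof.
move=> dh; pose g t : V := cos t *: A + sin t *: B.
have dcos : differentiable (@cos R) 0 by apply/derivable1_diffP.
have dsin : differentiable (@sin R) 0 by apply/derivable1_diffP.
have dA : differentiable (fun t => cos t *: A) 0 by exact: differentiableZl.
have dB : differentiable (fun t => sin t *: B) 0 by exact: differentiableZl.
have dg : differentiable g 0 by exact: differentiableD.
have g0 : g 0 = A by rewrite /g cos0 sin0 scale1r scale0r addr0.
have dg1 : 'd g 0 1 = B.
  rewrite /g diffD // !diffZl //=.
  by rewrite -!deriveE // !derive_val cos0 sin0 oppr0 scale0r add0r scale1r.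
rewrite -/(h \o g) deriveE; last by apply: differentiable_comp; rewrite ?g0.
by rewrite diff_comp ?g0 //= dg1 -deriveE.
Qed.

Lemma derive_trig_quadratic (R : realType) (a al be ga C : R) :
  'D_1 (fun t => al * cos (a * t) ^+ 2 + be * (cos (a * t) * sin (a * t))
      + ga * sin (a * t) ^+ 2 + C) 0 = be * a.
Proof.
have Dat : is_derive (0 : R) 1 ( *%R a) a by apply: is_derive_eq; rewrite [_%:A]mulr1.
have Du : is_derive (0 : R) 1 (fun t => cos (a * t)) 0.
  by have := is_derive1_comp (is_derive_cos (a * 0)) Dat; rewrite mulr0 sin0 oppr0 mul0r.
have Dv : is_derive (0 : R) 1 (fun t => sin (a * t)) a.
  by have := is_derive1_comp (is_derive_sin (a * 0)) Dat; rewrite mulr0 cos0 mul1r.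
set u := fun t => cos (a * t) in Du *; set v := fun t => sin (a * t) in Dv *.
rewrite -[fun t => _]/(al *: u ^+ 2 + be *: (u * v) + ga *: v ^+ 2 + cst C).
have [_ ->] := is_deriveD (is_deriveD (is_deriveD (is_deriveZ al (is_deriveX 2 Du))
  (is_deriveZ be (is_deriveM Du Dv))) (is_deriveZ ga (is_deriveX 2 Dv)))
  (@is_derive_cst _ R^o R^o C 0 1).
rewrite /u /v /= mulr0 cos0 sin0.
by rewrite !(scaler0, scale0r, scale1r, expr1, mulr0, mul0r, mulr1, mul1r, addr0, add0r).
Qed.

(* The real inner product Re tr (X^H Y) on C^{2x2}. *)
Definition cdot (R : realType) (X Y : cmx R) : R :=
  \sum_i \sum_j (X.1 i j * Y.1 i j + X.2 i j * Y.2 i j).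

Lemma cdotE (R : realType) (X Y : cmx R) : cdot X Y =
  X.1 0 0 * Y.1 0 0 + X.1 0 1 * Y.1 0 1 + X.1 1 0 * Y.1 1 0 + X.1 1 1 * Y.1 1 1 +
  (X.2 0 0 * Y.2 0 0 + X.2 0 1 * Y.2 0 1 + X.2 1 0 * Y.2 1 0 + X.2 1 1 * Y.2 1 1).
Proof. by rewrite /cdot !sum_ord2; ring. Qed.

Lemma derive_egrad (R : realType) (h : cmx R -> R) (X V : cmx R) :
  differentiable h X -> 'D_V h X = cdot V (egrad h X).
Proof.
move=> dh.
have decV : V = \sum_i \sum_j
    (V.1 i j *: ((delta_mx i j, 0) : cmx R) + V.2 i j *: ((0, delta_mx i j) : cmx R)).
  apply: injective_projections; rewrite !raddf_sum /= [LHS]matrix_sum_delta;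
    apply: eq_bigr => i _; rewrite raddf_sum; apply: eq_bigr => j _ /=.
    by rewrite scaler0 addr0.
  by rewrite scaler0 add0r.
rewrite deriveE // {1}decV !raddf_sum; apply: eq_bigr => i _.
rewrite raddf_sum; apply: eq_bigr => j _.
by rewrite raddfD; congr (_ + _); rewrite mxE deriveE //; exact: linearZZ.
Qed.

Section UnitaryGroup.
Variable R : realType.
Local Notation I2 := (cI2 R).

Lemma cmul1x (X : cmx R) : cmul I2 X = X.
Proof. by case: X => X1 X2; rewrite /cmul /= !mul1mx !mul0mx subr0 addr0. Qed.

Lemma cadj_I2 : cadj I2 = I2.
Proof. by rewrite /cadj /= trmx1 trmx0 oppr0. Qed.

Lemma unitary_I2 : unitary I2.
Proof. by rewrite /unitary cadj_I2 cmul1x. Qed.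

Lemma rgrad_I2 h : rgrad h I2 = Defs.skew (egrad h I2).
Proof. by rewrite /rgrad cadj_I2 !cmul1x. Qed.

Lemma diag_unitary_cos_sin (D : 'M[R]_2) t :
  D^T = D -> D *m D = 1%:M -> (forall i j, i != j -> D i j = 0) ->
  diag_unitary (cos t *: I2 + sin t *: ((0, D) : cmx R)).
Proof.
move=> DT DD Ddiag; split.
  rewrite /unitary /cmul /cadj /= !scaler0 addr0 add0r !linearZ /= trmx1 DT.
  rewrite -!scalemxAl !mul1mx !mulmx1 mulNmx DD !scalerN opprK !scalerA.
  by rewrite -scalerDl -!expr2 cos2Dsin2 scale1r mulrC subrr.
move=> i j ij; rewrite /= !scaler0 addr0 add0r !mxE Ddiag //.
by rewrite (negbTE ij) mulr0 mulr0.
Qed.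

(* h is constant along the diagonal unitary curves cos t I + i sin t D, for
   D = I and D = diag(1, -1). *)
Lemma egrad_I2_im_diag_eq0 (h : cmx R -> R) : differentiable h I2 ->
  (forall Ps D, unitary Ps -> diag_unitary D -> h (cmul Ps D) = h Ps) ->
  (egrad h I2).2 0 0 = 0 /\ (egrad h I2).2 1 1 = 0.
Proof.
move=> dh hinv.
have phase (D : 'M[R]_2) : D^T = D -> D *m D = 1%:M ->
    (forall i j, i != j -> D i j = 0) ->
    D 0 0 * (egrad h I2).2 0 0 + D 1 1 * (egrad h I2).2 1 1 = 0.
  move=> DT DD Ddiag.
  have : cdot (0, D) (egrad h I2) = 0.
    rewrite -derive_egrad // -derive_trig_curve //.
    have -> : (fun t => h (cos t *: I2 + sin t *: ((0, D) : cmx R))) = cst (h I2).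
      apply/funext => t; rewrite -(cmul1x (cos t *: I2 + _)).
      by apply: hinv; [exact: unitary_I2 | exact: diag_unitary_cos_sin].
    exact: derive_cst.
  rewrite cdotE; move: (egrad h I2) => G /=.
  by rewrite !mxE (Ddiag 0 1) ?(Ddiag 1 0) //; lra.
set E := delta_mx 1 1 : 'M[R]_2.
have refl_sym : (1%:M - 2 *: E)^T = 1%:M - 2 *: E.
  by rewrite linearB linearZ /= trmx1 trmx_delta.
have refl_invol : (1%:M - 2 *: E) *m (1%:M - 2 *: E) = 1%:M.
  rewrite mulmxBl !mulmxBr !mul1mx mulmx1 -!scalemxAl -!scalemxAr mul_delta_mx scalerA.
  by apply/matrixP => i j; rewrite !mxE; ring.
have refl_diag i j : i != j -> (1%:M - 2 *: E) i j = 0.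
  move=> ij; rewrite !mxE (negbTE ij).
  have -> : (i == 1) && (j == 1) = false.
    by apply/negbTE; apply: contra ij => /andP[/eqP-> /eqP->].
  by rewrite mulr0 subrr.
have id_diag i j : i != j -> (1%:M : 'M[R]_2) i j = 0 by rewrite mxE => /negbTE ->.
have := phase _ refl_sym refl_invol refl_diag.
have := phase 1%:M (trmx1 _ _) (mulmx1 _) id_diag.
move: (egrad h I2) => G; rewrite !mxE /= => e1 e2.
by split; lra.
Qed.

Lemma Psi_cos_sin t p : Psi t p = cos t *: I2 + sin t *: Psi (pi / 2) p.
Proof.
rewrite /Psi cos_pihalf sin_pihalf.
apply: injective_projections => /=; apply/matrixP => i j; rewrite !mxE.
  by case: eqP => _; [|case: eqP => _]; rewrite /= ?mulr1 ?mulr0 ?addr0 ?add0r ?mul1r ?mulrN.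
by case: eqP => _; rewrite ?mulr0 ?addr0 ?add0r ?mul1r ?mulrN.
Qed.

Lemma Psi0 p : Psi 0 p = I2.
Proof. by rewrite Psi_cos_sin cos0 sin0 scale1r scale0r addr0. Qed.

Lemma derive_comp_Psi (h : cmx R -> R) p : differentiable h I2 ->
  'D_1 (fun t => h (Psi t p)) 0 =
  cos p * ((egrad h I2).1 1 0 - (egrad h I2).1 0 1)
  - sin p * ((egrad h I2).2 0 1 + (egrad h I2).2 1 0).
Proof.
move=> dh; under eq_fun do rewrite Psi_cos_sin.
rewrite derive_trig_curve // derive_egrad // cdotE; move: (egrad h I2) => G.
by rewrite !mxE /= cos_pihalf sin_pihalf; ring.
Qed.

Lemma frob_sqr (X : cmx R) : frob X ^+ 2 = cdot X X.
Proof.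
rewrite /frob /cdot sqr_sqrtr; last by do 2!(apply: sumr_ge0 => ? _); rewrite addr_ge0 ?sqr_ge0.
by do 2!(apply: eq_bigr => ? _); rewrite !expr2.
Qed.

Lemma frob_skew_sqr (G : cmx R) : frob (Defs.skew G) ^+ 2 =
  G.2 0 0 ^+ 2 + G.2 1 1 ^+ 2 + ((G.1 1 0 - G.1 0 1) ^+ 2 + (G.2 0 1 + G.2 1 0) ^+ 2) / 2.
Proof. by rewrite frob_sqr cdotE /Defs.skew /csub /cadj /= !mxE; field. Qed.

Lemma frob_Psi_subI2_sqr t p : frob (csub (Psi t p) I2) ^+ 2 = 4 * (1 - cos t).
Proof.
rewrite frob_sqr cdotE /csub /= !mxE /=.
transitivity (2 * (cos t - 1) ^+ 2 + 2 * sin t ^+ 2 * (cos p ^+ 2 + sin p ^+ 2)).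
  by ring.
by rewrite cos2Dsin2 mulr1 -[sin t ^+ 2](addKr (cos t ^+ 2)) cos2Dsin2; ring.
Qed.

Lemma frob_Psi_subI2_le (a : nat) t p : (0 < a)%N -> 0 <= t <= pi / (2 * a%:R) ->
  frob (csub (Psi t p) I2) ^+ 2 <= 8 * (1 - cos (a%:R * t) ^+ 2).
Proof.
move=> a_gt0 t_itv; have := one_sub_cos_le a_gt0 t_itv.
by rewrite frob_Psi_subI2_sqr; lra.
Qed.

Lemma zab_quad_form a b t p (M : 'M[R]_3) :
  ((zab a b t p)^T *m M *m zab a b t p) 0 0 =
  M 0 0 * cos (a%:R * t) ^+ 2
  + - ((M 0 1 + M 1 0) * cos (b%:R * p) + (M 0 2 + M 2 0) * sin (b%:R * p))
    * (cos (a%:R * t) * sin (a%:R * t))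
  + (M 1 1 * cos (b%:R * p) ^+ 2 + (M 1 2 + M 2 1) * (cos (b%:R * p) * sin (b%:R * p))
     + M 2 2 * sin (b%:R * p) ^+ 2) * sin (a%:R * t) ^+ 2.
Proof. by rewrite mxE sum_ord3 !mxE !sum_ord3 !mxE /=; ring. Qed.

Lemma frob_rgrad_I2_le (h : cmx R -> R) (a b : nat) (M : 'M[R]_3) (C : R) :
  differentiable h I2 ->
  (forall Ps D, unitary Ps -> diag_unitary D -> h (cmul Ps D) = h Ps) ->
  M^T = M ->
  (forall t p, h (Psi t p) = ((zab a b t p)^T *m M *m zab a b t p) 0 0 + C) ->
  frob (rgrad h I2) ^+ 2 <= 2 * a%:R ^+ 2 * (M 1 0 ^+ 2 + M 2 0 ^+ 2).
Proof.
move=> dh hinv MT hPsi.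
have slope p : 'D_1 (fun t => h (Psi t p)) 0
    = - (2 * a%:R) * (M 1 0 * cos (b%:R * p) + M 2 0 * sin (b%:R * p)).
  under eq_fun do rewrite hPsi zab_quad_form.
  have M01 : M 0 1 = M 1 0 by rewrite -[in LHS]MT mxE.
  have M02 : M 0 2 = M 2 0 by rewrite -[in LHS]MT mxE.
  by rewrite derive_trig_quadratic M01 M02; ring.
have [G00 G11] := egrad_I2_im_diag_eq0 dh hinv; have slopeG p := derive_comp_Psi p dh.
rewrite rgrad_I2 frob_skew_sqr; move: (egrad h I2) G00 G11 slopeG => G -> -> slopeG.
set g1 := G.1 1 0 - G.1 0 1; set g2 := G.2 0 1 + G.2 1 0.
have : g1 ^+ 2 + (- g2) ^+ 2 <= (2 * a%:R) ^+ 2 * (M 1 0 ^+ 2 + M 2 0 ^+ 2).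
  apply: sqr_le_of_cos_sin_comb => p.
  rewrite mulrN -slopeG slope exprMn sqrrN.
  by rewrite ler_wpM2l ?sqr_ge0 // cos_sin_comb_sqr_le.
by rewrite sqrrN exprMn expr0n /=; lra.
Qed.

End UnitaryGroup.

Local Open Scope classical_set_scope.

Theorem lemma4p4 (R : realType) (a b : nat) (h : cmx R -> R)
  (M : 'M[R]_3) (C : R) (l1 l2 l3 eps : R) (w : 'cV[R]_3) (ts ps : R) :
  (0 < a)%N -> (0 < b)%N ->
  (exists O : set (cmx R), open O /\ (forall U, unitary U -> O U) /\
      (forall X, O X -> differentiable h X)) ->
  (forall Ps D, unitary Ps -> diag_unitary D -> h (cmul Ps D) = h Ps) ->
  M^T = M ->
  (forall t p : R, h (Psi t p) = ((zab a b t p)^T *m M *m zab a b t p) 0 0 + C) ->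
  char_poly M = ('X - l1%:P) * ('X - l2%:P) * ('X - l3%:P) ->
  l2 <= l1 -> l3 <= l2 ->
  0 < eps ->
  (l2 - l3) / (l1 - l3) <= 1 - eps ->
  M *m w = l1 *: w ->
  (w^T *m w) 0 0 = 1 ->
  0 <= w 0 0 ->
  0 <= ts <= pi / (2 * a%:R) ->
  zab a b ts ps = w ->
  h (Psi ts ps) - h (cI2 R) >=
    eps / (4 * a%:R) * frob (rgrad h (cI2 R)) * frob (csub (Psi ts ps) (cI2 R)).
Proof.
move=> a_gt0 _ [V [_ [unitary_V diff_V]]] hinv MT hPsi charM l21 l32 eps_gt0 gap Mw
  w_unit _ ts_itv zw.
have dh : differentiable h (cI2 R) by apply/diff_V/unitary_V; exact: unitary_I2.
have hI : h (cI2 R) = M 0 0 + C.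
  by rewrite -(Psi0 0) hPsi zab_quad_form mulr0 cos0 sin0; ring.
have hPsi_ts : h (Psi ts ps) = l1 + C.
  by rewrite hPsi zw -mulmxA Mw -scalemxAr mxE w_unit mulr1.
have w0 : w 0 0 = cos (a%:R * ts) by rewrite -zw mxE.
have [D_ge0 spectral] := top_eigen_gap_bound MT charM l21 l32 Mw w_unit eps_gt0
  (gap_of_ratio l32 l21 gap).
rewrite hPsi_ts hI (_ : l1 + C - (M 0 0 + C) = l1 - M 0 0); last by ring.
apply: (scaled_product_le eps_gt0 _ _ _ D_ge0 (frob_rgrad_I2_le dh hinv MT hPsi)).
- by rewrite ltr0n.
- exact: sqrtr_ge0.
- exact: sqrtr_ge0.
- exact: frob_Psi_subI2_le a_gt0 ts_itv.
- by rewrite -w0.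
Qed.
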